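(* Let $\pi_k$ be the current policy, let $\pi$ be any policy, and let $\pi_{k-i}$, $i=0,1,2,\ldots$, be prior policies. Let $\nu$ be any mixture distribution over prior policies, with $0\le\nu_i\le1$ the probability of using $\pi_{k-i}$ as reference policy and $\sum_i\nu_i=1$; write $\mathbb E_{i\sim\nu}[\cdot]$ for the corresponding expectation. Then $$J(\pi)-J(\pi_k)\;\ge\;\frac{1}{1-\gamma}\,\mathbb E_{i\sim\nu}\!\left[\mathbb E_{(s,a)\sim d^{\pi_{k-i}}}\!\left[\frac{\pi(a\mid s)}{\pi_{k-i}(a\mid s)}A^{\pi_k}(s,a)\right]\right]\;-\;\frac{2\gamma C^{\pi,\pi_k}}{(1-\gamma)^2}\,\mathbb E_{i\sim\nu}\!\left[\mathbb E_{s\sim d^{\pi_{k-i}}}\big[\mathrm{TV}(\pi,\pi_{k-i})(s)\big]\right],$$ where $C^{\pi,\pi_k}=\max_{s\in\mathcal S}\big|\mathbb E_{a\sim\pi(\cdot\mid s)}[A^{\pi_k}(s,a)]\big|$.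
   Context: We work with an infinite-horizon discounted Markov decision process $(\mathcal S,\mathcal A,p,r,\rho_0,\gamma)$ with state space $\mathcal S$, action space $\mathcal A$, transition kernel $p(\cdot\mid s,a)$, reward $r:\mathcal S\times\mathcal A\to\mathbb R$, initial state distribution $\rho_0$, and discount $\gamma\in[0,1)$. A (stationary) policy $\pi$ maps each state $s$ to a distribution $\pi(\cdot\mid s)$ over actions. The objective is $J(\pi)=\mathbb E_{\tau\sim\pi}[\sum_{t=0}^\infty\gamma^t r(s_t,a_t)]$, where trajectories are generated by $s_0\sim\rho_0$, $a_t\sim\pi(\cdot\mid s_t)$, $s_{t+1}\sim p(\cdot\mid s_t,a_t)$. The normalized discounted state visitation distribution is $d^{\pi}(s)=(1-\gamma)\sum_{t=0}^\infty\gamma^t\,\mathbb P(s_t=s\mid\rho_0,\pi,p)$, and $d^{\pi}(s,a)=d^{\pi}(s)\pi(a\mid s)$. $V^{\pi}$, $Q^{\pi}$ are the discounted state and state-action value functions of $\pi$, and $A^{\pi}(s,a)=Q^{\pi}(s,a)-V^{\pi}(s)$ is the advantage function. $\mathrm{TV}(\pi,\pi')(s)$ is the total variation distance between $\pi(\cdot\mid s)$ and $\pi'(\cdot\mid s)$. *)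

From mathcomp Require Import all_boot all_order all_algebra.
From mathcomp Require Import all_classical all_reals all_analysis.
Set Implicit Arguments. Unset Strict Implicit. Unset Printing Implicit Defensive.
Import Order.TTheory GRing.Theory Num.Theory numFieldNormedType.Exports.
Local Open Scope ring_scope.

Section MDP.
Variables (R : realType) (S A : finType).

(* transition kernel p s a s' = p(s' | s, a); policy pi s a = pi(a | s) *)
Definition is_kernel (p : S -> A -> S -> R) :=
  (forall s a s', 0 <= p s a s') /\ (forall s a, \sum_(s' : S) p s a s' = 1).
Definition is_policy (pi : S -> A -> R) :=
  (forall s a, 0 <= pi s a) /\ (forall s, \sum_(a : A) pi s a = 1).
Definition is_distr (rho : S -> R) :=
  (forall s, 0 <= rho s) /\ \sum_(s : S) rho s = 1.

Definition inf_sum (u : nat -> R) : R := limn (series u).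

(* joint law of (s_t, a_t) under policy pi, dynamics p, initial law mu0 of (s_0,a_0) *)
Fixpoint marg (p : S -> A -> S -> R) (pi : S -> A -> R) (mu0 : S -> A -> R)
    (t : nat) : S -> A -> R :=
  match t with
  | 0 => mu0
  | t'.+1 => fun s' a' =>
      (\sum_(s : S) \sum_(a : A) marg p pi mu0 t' s a * p s a s') * pi s' a'
  end.

Definition disc_return p (r : S -> A -> R) gamma pi mu0 : R :=
  inf_sum (fun t => gamma ^+ t *
     \sum_(s : S) \sum_(a : A) marg p pi mu0 t s a * r s a).

Definition init_sa (rho : S -> R) (pi : S -> A -> R) : S -> A -> R :=
  fun s a => rho s * pi s a.

Definition J p r (rho0 : S -> R) gamma pi : R :=
  disc_return p r gamma pi (init_sa rho0 pi).

Definition Vf p r gamma pi (s : S) : R :=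
  disc_return p r gamma pi (init_sa (fun s' => if s' == s then 1 else 0) pi).

Definition Qf p r gamma pi (s : S) (a : A) : R :=
  disc_return p r gamma pi
    (fun s' a' => if (s' == s) && (a' == a) then 1 else 0).

Definition Adv p r gamma pi (s : S) (a : A) : R :=
  Qf p r gamma pi s a - Vf p r gamma pi s.

Definition dvis p (rho0 : S -> R) gamma pi (s : S) : R :=
  (1 - gamma) * inf_sum (fun t => gamma ^+ t *
     \sum_(a : A) marg p pi (init_sa rho0 pi) t s a).

Definition TV (pi pi' : S -> A -> R) (s : S) : R :=
  2^-1 * \sum_(a : A) `|pi s a - pi' s a|.

End MDP.

(* By the performance difference lemma, J(pi) - J(pi_k) = sum_s D(s) f(s), where
   f(s) = E_{a ~ pi(.|s)} A^{pi_k}(s, a) and D is the unnormalised discounted occupancy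
   of pi, the solution of the flow equation D = rho0 + gamma D P_pi.  Replacing D by the
   occupancy D' of a reference policy pi' costs at most C ||D - D'||_1, and subtracting
   the two flow equations gives
     (1 - gamma) ||D - D'||_1 <= gamma sum_s D'(s) ||pi(.|s) - pi'(.|s)||_1
                              = 2 gamma sum_s D'(s) TV(pi, pi')(s).
   Importance weights pi / pi' rewrite sum_s D'(s) f(s) as an expectation under
   d^{pi'} = (1 - gamma) D'.  The resulting bound holds for each reference policy
   pi_{k-i}, and averaging it over nu gives the theorem. *)

From mathcomp Require Import all_boot all_order all_algebra.
From mathcomp Require Import all_classical all_reals all_analysis.
From mathcomp Require Import ring lra.
Import Order.TTheory GRing.Theory Num.Theory numFieldNormedType.Exports.
Local Open Scope classical_set_scope.
Local Open Scope ring_scope.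

Set Implicit Arguments.
Unset Strict Implicit.

Lemma ler_sum_term (R : numDomainType) (I : finType) (F : I -> R) i :
  (forall j, 0 <= F j) -> F i <= \sum_j F j.
Proof. by move=> h; rewrite (bigD1 i) //= lerDl sumr_ge0. Qed.

Arguments ler_sum_term {R I} F i.

Lemma sum_mul_indicator (R : pzSemiRingType) (I : finType) (F : I -> R) (x : I) :
  \sum_y F y * (if x == y then 1 else 0) = F x.
Proof.
rewrite (bigD1 x) //= eqxx mulr1 big1 ?addr0 // => y; rewrite eq_sym => /negbTE ->.
by rewrite mulr0.
Qed.

Section SeriesSums.
Variable R : realType.
Implicit Types (u v : nat -> R) (l m : R).

Definition sums_to u l := cvgn (series u) /\ limn (series u) = l.

Lemma sums_toP u l : series u @ \oo --> l -> sums_to u l.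
Proof. by move=> h; split; [exact: cvgP h | exact: cvg_lim]. Qed.

Lemma sums_to_cvg u l : sums_to u l -> series u @ \oo --> l.
Proof. by case=> h <-. Qed.

Lemma sums_to_inf_sum u l : sums_to u l -> inf_sum u = l.
Proof. by case. Qed.

Lemma eq_sums_to u v l : u =1 v -> sums_to u l -> sums_to v l.
Proof. by move=> /funext ->. Qed.

Lemma sums_to0 : sums_to (fun=> 0) 0.
Proof.
apply: sums_toP; rewrite (_ : series _ = fun=> 0); first exact: cvg_cst.
by apply/funext => n; rewrite seriesEord /= big1.
Qed.

Lemma sums_toS u l : sums_to (fun t => u t.+1) l -> sums_to u (u 0%N + l).
Proof.
move=> /sums_to_cvg h; apply: sums_toP; rewrite -cvg_shiftS.
have -> : [sequence series u n.+1]_n = (fun n => u 0%N + series (fun t => u t.+1) n).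
  by apply/funext => n /=; rewrite !seriesEord /= big_ord_recl.
exact: cvgD (cvg_cst _) h.
Qed.

Lemma sums_toZ u l c : sums_to u l -> sums_to (fun t => c * u t) (c * l).
Proof.
move=> /sums_to_cvg h; apply: sums_toP.
rewrite (_ : series _ = fun n => c * series u n); first exact: cvgMl_tmp.
by apply/funext => n; rewrite !seriesEord mulr_sumr.
Qed.

Lemma sums_toD u v l m : sums_to u l -> sums_to v m -> sums_to (fun t => u t + v t) (l + m).
Proof.
move=> /sums_to_cvg hu /sums_to_cvg hv; apply: sums_toP.
by rewrite (_ : series _ = series u + series v) ?seriesD //; exact: cvgD.
Qed.

Lemma sums_to_sum (I : Type) (s : seq I) (u : I -> nat -> R) (l : I -> R) :
  (forall i, sums_to (u i) (l i)) ->
  sums_to (fun t => \sum_(i <- s) u i t) (\sum_(i <- s) l i).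
Proof.
move=> h; elim: s => [|i s IH].
  by rewrite big_nil; apply: eq_sums_to sums_to0 => t; rewrite big_nil.
by rewrite big_cons; apply: eq_sums_to (sums_toD (h i) IH) => t; rewrite big_cons.
Qed.

Lemma ler_sums_to u v l m : (forall t, u t <= v t) -> sums_to u l -> sums_to v m -> l <= m.
Proof. by move=> uv [hu <-] [hv <-]; apply: lim_series_le. Qed.

Lemma sums_to_ge0 u l : (forall t, 0 <= u t) -> sums_to u l -> 0 <= l.
Proof. by move=> h; apply: ler_sums_to h sums_to0. Qed.

Lemma sums_to_discounted u g M : 0 <= g -> g < 1 -> (forall t, `|u t| <= M) ->
  exists l, sums_to (fun t => g ^+ t * u t) l.
Proof.
move=> g0 g1 hM; exists (limn (series (fun t => g ^+ t * u t))); split => //.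
apply: normed_cvg.
apply: (@series_le_cvg _ _ (geometric M g)).
- by move=> n /=.
- by move=> n; rewrite /geometric /= mulr_ge0 ?exprn_ge0 // (le_trans _ (hM 0%N)).
- move=> n; rewrite /geometric /= normrM ger0_norm ?exprn_ge0 // mulrC.
  by rewrite ler_wpM2r ?exprn_ge0.
- by apply: is_cvg_geometric_series; rewrite ger0_norm.
Qed.

End SeriesSums.

Section FiniteMDP.
Variables (R : realType) (S A : finType) (p : S -> A -> S -> R).
Hypothesis hp : is_kernel p.

Definition is_joint_distr (mu : S -> A -> R) :=
  (forall s a, 0 <= mu s a) /\ \sum_s \sum_a mu s a = 1.

Definition point_mass (s : S) : S -> R := fun s' => if s' == s then 1 else 0.

Definition point_mass2 (s : S) (a : A) : S -> A -> R :=
  fun s' a' => if (s' == s) && (a' == a) then 1 else 0.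

Definition step (pi : S -> A -> R) (mu : S -> A -> R) : S -> A -> R :=
  fun s' a' => (\sum_s \sum_a mu s a * p s a s') * pi s' a'.

Definition trans (pi : S -> A -> R) (s s' : S) : R := \sum_a pi s a * p s a s'.

Lemma is_distr_point_mass s : is_distr (point_mass s).
Proof.
split=> [x|]; first by rewrite /point_mass; case: eqP.
by rewrite -big_mkcond big_pred1_eq.
Qed.

Lemma is_joint_distr_point_mass2 s a : is_joint_distr (point_mass2 s a).
Proof.
split=> [x b|]; first by rewrite /point_mass2; case: (_ && _).
rewrite (bigD1 s) //= [X in _ + X]big1 ?addr0 => [|x /negbTE xs]; last first.
  by apply: big1 => b _; rewrite /point_mass2 xs.
by rewrite /point_mass2 eqxx /= -big_mkcond big_pred1_eq.
Qed.

Lemma is_joint_distr_init rho pi :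
  is_distr rho -> is_policy pi -> is_joint_distr (init_sa rho pi).
Proof.
move=> [rho0 rho1] [pi0 pi1]; split=> [s a|]; first by rewrite /init_sa mulr_ge0.
by rewrite -rho1; apply: eq_bigr => s _; rewrite /init_sa -mulr_sumr pi1 mulr1.
Qed.

Lemma sum_point_mass2 s a (F : S -> A -> R) : \sum_x \sum_b point_mass2 s a x b * F x b = F s a.
Proof.
rewrite (bigD1 s) //= [X in _ + X]big1 ?addr0 => [|x /negbTE xs]; last first.
  by apply: big1 => b _; rewrite /point_mass2 xs mul0r.
rewrite /point_mass2 eqxx /=.
by under eq_bigr do rewrite mulrC eq_sym; exact: sum_mul_indicator.
Qed.

Lemma trans_ge0 pi s s' : is_policy pi -> 0 <= trans pi s s'.
Proof. by move=> [pi0 _]; apply: sumr_ge0 => a _; rewrite mulr_ge0 //; case: hp. Qed.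

Lemma trans_sum1 pi s : is_policy pi -> \sum_s' trans pi s s' = 1.
Proof.
move=> [_ pi1]; rewrite /trans exchange_big /= -(pi1 s); apply: eq_bigr => a _.
by rewrite -mulr_sumr (proj2 hp) mulr1.
Qed.

Lemma marg_step pi mu t s a : marg p pi (step pi mu) t s a = marg p pi mu t.+1 s a.
Proof.
elim: t s a => [//|t IH] s a /=.
by congr (_ * _); apply: eq_bigr => x _; apply: eq_bigr => b _; rewrite IH.
Qed.

Lemma marg_sum (X : finType) pi (c : X -> R) (mu : X -> S -> A -> R) t s a :
  marg p pi (fun s a => \sum_x c x * mu x s a) t s a = \sum_x c x * marg p pi (mu x) t s a.
Proof.
elim: t s a => [//|t IH] s a /=.
under eq_bigr => y _ do under eq_bigr => b _ do rewrite IH mulr_suml.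
under eq_bigr => y _ do rewrite exchange_big /=.
rewrite exchange_big /= mulr_suml; apply: eq_bigr => x _.
rewrite mulrA; congr (_ * _); rewrite mulr_sumr; apply: eq_bigr => y _.
by rewrite mulr_sumr; apply: eq_bigr => b _; rewrite !mulrA.
Qed.

Lemma is_joint_distr_marg pi mu t :
  is_policy pi -> is_joint_distr mu -> is_joint_distr (marg p pi mu t).
Proof.
move=> [pi0 pi1] hmu; elim: t => [//|t [IH0 IH1]] /=; split.
  move=> s a; apply: mulr_ge0 => //; do 2 apply: sumr_ge0 => ? _.
  by apply: mulr_ge0 => //; case: hp.
under eq_bigr => s _ do rewrite -mulr_sumr pi1 mulr1.
rewrite exchange_big /= -IH1; apply: eq_bigr => s _.
rewrite exchange_big /=; apply: eq_bigr => a _.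
by rewrite -mulr_sumr (proj2 hp) mulr1.
Qed.

End FiniteMDP.

Arguments point_mass {R S}.
Arguments point_mass2 {R S A}.
Arguments is_distr_point_mass {R S}.
Arguments is_joint_distr_point_mass2 {R S A}.

Section DiscountedReturn.
Variables (R : realType) (S A : finType) (p : S -> A -> S -> R) (r : S -> A -> R).
Variable gamma : R.
Hypotheses (hp : is_kernel p) (hg0 : 0 <= gamma) (hg1 : gamma < 1).

Definition disc_term pi mu t := gamma ^+ t * \sum_s \sum_a marg p pi mu t s a * r s a.

Lemma sums_to_disc_return pi mu : is_policy pi -> is_joint_distr mu ->
  sums_to (disc_term pi mu) (disc_return p r gamma pi mu).
Proof.
move=> hpi hmu; pose M := \sum_s \sum_a `|r s a|.
have hr s a : `|r s a| <= M.
  apply: (le_trans (ler_sum_term (fun a => `|r s a|) a _)) => //.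
  by apply: (ler_sum_term (fun s => \sum_a `|r s a|)) => x; exact: sumr_ge0.
have [l hl] : exists l, sums_to (disc_term pi mu) l.
  apply: (@sums_to_discounted _ _ gamma M) => // t.
  have [m0 m1] := is_joint_distr_marg hp t hpi hmu.
  apply: (le_trans (ler_norm_sum _ _ _)).
  apply: (@le_trans _ _ (\sum_s \sum_a marg p pi mu t s a * M)).
    apply: ler_sum => s _; apply: (le_trans (ler_norm_sum _ _ _)).
    by apply: ler_sum => a _; rewrite normrM ger0_norm // ler_wpM2l.
  by under eq_bigr do rewrite -mulr_suml; rewrite -mulr_suml m1 mul1r.
by have -> : disc_return p r gamma pi mu = l := sums_to_inf_sum hl.
Qed.

Lemma disc_term_sum (X : finType) pi (c : X -> R) (mu : X -> S -> A -> R) t :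
  disc_term pi (fun s a => \sum_x c x * mu x s a) t = \sum_x c x * disc_term pi (mu x) t.
Proof.
rewrite /disc_term; under eq_bigr => s _ do under eq_bigr => a _ do rewrite marg_sum mulr_suml.
under eq_bigr => s _ do rewrite exchange_big /=.
rewrite exchange_big /= mulr_sumr; apply: eq_bigr => x _.
rewrite mulrCA; congr (_ * _); rewrite mulr_sumr; apply: eq_bigr => s _.
by rewrite mulr_sumr; apply: eq_bigr => a _; rewrite !mulrA.
Qed.

Lemma disc_return_sum (X : finType) pi (c : X -> R) (mu : X -> S -> A -> R) :
  is_policy pi -> (forall x, is_joint_distr (mu x)) ->
  disc_return p r gamma pi (fun s a => \sum_x c x * mu x s a) =
  \sum_x c x * disc_return p r gamma pi (mu x).
Proof.
move=> hpi hmu.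
have := sums_to_sum (index_enum X) (fun x => sums_toZ (c x) (sums_to_disc_return hpi (hmu x))).
move=> /(eq_sums_to (fun t => esym (disc_term_sum pi c mu t))).
exact: sums_to_inf_sum.
Qed.

Lemma disc_return_step pi mu : is_policy pi -> is_joint_distr mu ->
  disc_return p r gamma pi mu =
  \sum_s \sum_a mu s a * r s a + gamma * disc_return p r gamma pi (step p pi mu).
Proof.
move=> hpi hmu.
(* [step p pi mu] is [marg p pi mu 1] by definition. *)
have hstep : is_joint_distr (step p pi mu) := is_joint_distr_marg hp 1 hpi hmu.
have h : sums_to (fun t => disc_term pi mu t.+1)
    (gamma * disc_return p r gamma pi (step p pi mu)).
  apply: eq_sums_to (sums_toZ gamma (sums_to_disc_return hpi hstep)) => t.
  rewrite /disc_term exprS -mulrA; congr (_ * (_ * _)).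
  by apply: eq_bigr => s _; apply: eq_bigr => a _; rewrite marg_step.
by have := sums_to_inf_sum (sums_toS h); rewrite /disc_term expr0 mul1r.
Qed.

Lemma Qf_bellman pik s a : is_policy pik ->
  Qf p r gamma pik s a = r s a + gamma * \sum_s' p s a s' * Vf p r gamma pik s'.
Proof.
move=> hpik.
have hstep : step p pik (point_mass2 s a) =
    fun x b => \sum_s' p s a s' * init_sa (point_mass s') pik x b.
  apply/funext => x; apply/funext => b.
  rewrite /step sum_point_mass2 /init_sa /point_mass.
  by under eq_bigr do rewrite mulrA; rewrite -mulr_suml sum_mul_indicator.
have -> : Qf p r gamma pik s a = disc_return p r gamma pik (point_mass2 s a) by [].
rewrite (disc_return_step hpik (is_joint_distr_point_mass2 s a)) sum_point_mass2 hstep.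
rewrite disc_return_sum // => s'.
exact: is_joint_distr_init (is_distr_point_mass s') hpik.
Qed.

Lemma J_Vf rho pik : is_distr rho -> is_policy pik ->
  J p r rho gamma pik = \sum_s rho s * Vf p r gamma pik s.
Proof.
move=> hrho hpik; rewrite /J.
have -> : init_sa rho pik = fun x b => \sum_s rho s * init_sa (point_mass s) pik x b.
  apply/funext => x; apply/funext => b; rewrite /init_sa /point_mass.
  by under eq_bigr do rewrite mulrA; rewrite -mulr_suml sum_mul_indicator.
rewrite disc_return_sum // => s.
exact: is_joint_distr_init (is_distr_point_mass s) hpik.
Qed.

End DiscountedReturn.

Lemma flow_telescope (R : comPzRingType) (S : finType) (gamma : R) (D rho V : S -> R)
    (P : S -> S -> R) :
  (forall s', D s' = rho s' + gamma * \sum_s D s * P s s') ->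
  \sum_s D s * (gamma * \sum_s' P s s' * V s' - V s) = - \sum_s rho s * V s.
Proof.
move=> flow.
have shift : \sum_s D s * (gamma * \sum_s' P s s' * V s') = \sum_s' (D s' - rho s') * V s'.
  under [RHS]eq_bigr => s' _ do rewrite {1}flow addrAC subrr add0r mulr_sumr mulr_suml.
  under [LHS]eq_bigr => s _ do rewrite 2!mulr_sumr.
  by rewrite exchange_big /=; apply: eq_bigr => s' _; apply: eq_bigr => s _; ring.
under eq_bigr do rewrite mulrBr.
by rewrite sumrB shift -sumrB -sumrN; apply: eq_bigr => s _; ring.
Qed.

Section Occupancy.
Variables (R : realType) (S A : finType) (p : S -> A -> S -> R) (gamma : R).
Hypotheses (hp : is_kernel p) (hg0 : 0 <= gamma) (hg1 : gamma < 1).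
Variables (pi : S -> A -> R) (rho : S -> R).
Hypotheses (hpi : is_policy pi) (hrho : is_distr rho).

Definition state_marg t s := \sum_a marg p pi (init_sa rho pi) t s a.

Definition occ s := inf_sum (fun t => gamma ^+ t * state_marg t s).

Lemma marg_initE t s a : marg p pi (init_sa rho pi) t s a = state_marg t s * pi s a.
Proof.
rewrite /state_marg; case: t => [|t] /=.
  by rewrite /init_sa -mulr_sumr (proj2 hpi) mulr1.
by rewrite -mulr_sumr (proj2 hpi) mulr1.
Qed.

Lemma state_marg0 s : state_marg 0 s = rho s.
Proof. by rewrite /state_marg /= /init_sa -mulr_sumr (proj2 hpi) mulr1. Qed.

Lemma state_margS t s' : state_marg t.+1 s' = \sum_s state_marg t s * trans p pi s s'.
Proof.
rewrite /state_marg /= -mulr_sumr (proj2 hpi) mulr1; apply: eq_bigr => s _.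
rewrite /trans mulr_sumr; apply: eq_bigr => a _.
by rewrite -/(state_marg t s) marg_initE mulrA.
Qed.

Lemma state_marg_bound t s : 0 <= state_marg t s <= 1.
Proof.
have [m0 m1] := is_joint_distr_marg hp t hpi (is_joint_distr_init hrho hpi).
have ge0 x : 0 <= state_marg t x by apply: sumr_ge0.
by rewrite ge0 -m1 (ler_sum_term (state_marg t)).
Qed.

Lemma sums_to_occ s : sums_to (fun t => gamma ^+ t * state_marg t s) (occ s).
Proof.
have [l hl] : exists l, sums_to (fun t => gamma ^+ t * state_marg t s) l.
  apply: (@sums_to_discounted _ _ gamma 1) => // t.
  by have /andP[m0 m1] := state_marg_bound t s; rewrite ger0_norm.
by rewrite /occ (sums_to_inf_sum hl).
Qed.

Lemma occ_ge0 s : 0 <= occ s.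
Proof.
apply: (sums_to_ge0 _ (sums_to_occ s)) => t.
by rewrite mulr_ge0 ?exprn_ge0 //; case/andP: (state_marg_bound t s).
Qed.

Lemma occ_flow s' : occ s' = rho s' + gamma * \sum_s occ s * trans p pi s s'.
Proof.
have h := sums_to_sum (index_enum S)
  (fun s => sums_toZ (gamma * trans p pi s s') (sums_to_occ s)).
have h1 : sums_to (fun t => gamma ^+ t.+1 * state_marg t.+1 s')
    (\sum_s gamma * trans p pi s s' * occ s).
  apply: eq_sums_to h => t; rewrite state_margS exprS mulr_sumr.
  by apply: eq_bigr => s _; ring.
rewrite {1}/occ (sums_to_inf_sum (sums_toS (u := fun t => gamma ^+ t * state_marg t s') h1)).
rewrite /= expr0 mul1r state_marg0 mulr_sumr.
by congr (_ + _); apply: eq_bigr => s _; ring.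
Qed.

Lemma J_occ r : J p r rho gamma pi = \sum_s occ s * \sum_a pi s a * r s a.
Proof.
have h := sums_to_sum (index_enum S)
  (fun s => sums_toZ (\sum_a pi s a * r s a) (sums_to_occ s)).
rewrite (eq_bigr _ (fun s _ => mulrC _ _)) -(sums_to_inf_sum h).
congr inf_sum; apply/funext => t; rewrite mulr_sumr; apply: eq_bigr => s _.
by under eq_bigr do rewrite marg_initE -mulrA; rewrite -mulr_sumr; ring.
Qed.

End Occupancy.

Lemma ler_sum_mul_norm1 (R : realDomainType) (I : finType) (x f : I -> R) C :
  (forall i, `|f i| <= C) -> \sum_i x i * f i <= C * \sum_i `|x i|.
Proof.
move=> hC; rewrite mulr_sumr; apply: ler_sum => i _.
by apply: (le_trans (ler_norm _)); rewrite normrM mulrC ler_wpM2r.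
Qed.

Lemma ler_norm1_stochastic (R : numDomainType) (S : finType) (x : S -> R) (Q : S -> S -> R) :
  (forall s s', 0 <= Q s s') -> (forall s, \sum_s' Q s s' = 1) ->
  \sum_s' `|\sum_s x s * Q s s'| <= \sum_s `|x s|.
Proof.
move=> Q0 Q1.
apply: (@le_trans _ _ (\sum_s' \sum_s `|x s| * Q s s')).
  apply: ler_sum => s' _; apply: (le_trans (ler_norm_sum _ _ _)).
  by apply: ler_sum => s _; rewrite normrM (ger0_norm (Q0 s s')).
by rewrite exchange_big /=; apply: ler_sum => s _; rewrite -mulr_sumr Q1 mulr1.
Qed.

(* [pi / pi'] is [0] where [pi'] vanishes; the support hypothesis makes [pi] vanish
   there too. *)
Lemma sum_importance_weight (R : fieldType) (S A : finType) (w : S -> R)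
    (pi pi' g : S -> A -> R) :
  (forall s a, pi' s a = 0 -> pi s a = 0) ->
  \sum_s \sum_a (w s * pi' s a) * (pi s a / pi' s a * g s a) =
  \sum_s w s * \sum_a pi s a * g s a.
Proof.
move=> supp; apply: eq_bigr => s _; rewrite mulr_sumr; apply: eq_bigr => a _.
have [z|nz] := eqVneq (pi' s a) 0; last by field.
by rewrite z (supp s a z) !(mulr0, mul0r).
Qed.

Section PerformanceBounds.
Variables (R : realType) (S A : finType) (p : S -> A -> S -> R) (r : S -> A -> R).
Variable gamma : R.
Hypotheses (hp : is_kernel p) (hg0 : 0 <= gamma) (hg1 : gamma < 1).

Lemma dvisE rho pi s : dvis p rho gamma pi s = (1 - gamma) * occ p gamma pi rho s.
Proof. by []. Qed.

Lemma performance_difference pi pik rho :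
  is_policy pi -> is_policy pik -> is_distr rho ->
  J p r rho gamma pi - J p r rho gamma pik =
  \sum_s occ p gamma pi rho s * \sum_a pi s a * Adv p r gamma pik s a.
Proof.
move=> hpi hpik hrho; set V := Vf p r gamma pik.
have adv_avg s : \sum_a pi s a * Adv p r gamma pik s a =
    \sum_a pi s a * r s a + (gamma * \sum_s' trans p pi s s' * V s' - V s).
  rewrite /Adv; under eq_bigr do rewrite (Qf_bellman r hp hg0 hg1) // mulrBr mulrDr.
  rewrite sumrB big_split /= -mulr_suml (proj2 hpi) mul1r -addrA; congr (_ + (_ - _)).
  rewrite /trans; under [X in _ = _ * X]eq_bigr do rewrite mulr_suml.
  rewrite exchange_big /= mulr_sumr; apply: eq_bigr => a _.
  by rewrite mulrCA mulr_sumr; congr (_ * _); apply: eq_bigr => s' _; rewrite mulrA.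
under eq_bigr do rewrite adv_avg mulrDr.
rewrite big_split /= (flow_telescope V (occ_flow hp hg0 hg1 hpi hrho)).
by rewrite -(J_occ hp hg0 hg1 hpi hrho) -(J_Vf r hp hg0 hg1 hrho hpik).
Qed.

Lemma trans_dist_le pi pi' s : is_policy pi -> is_policy pi' ->
  \sum_s' `|trans p pi s s' - trans p pi' s s'| <= \sum_a `|pi s a - pi' s a|.
Proof.
move=> hpi hpi'.
apply: (@le_trans _ _ (\sum_s' \sum_a `|pi s a - pi' s a| * p s a s')).
  apply: ler_sum => s' _; rewrite /trans -sumrB.
  apply: (le_trans (ler_norm_sum _ _ _)); apply: ler_sum => a _.
  by rewrite -mulrBl normrM (ger0_norm (proj1 hp s a s')).
rewrite exchange_big /=; apply: ler_sum => a _.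
by rewrite -mulr_sumr (proj2 hp) mulr1.
Qed.

Lemma occ_dist_le pi pi' rho : is_policy pi -> is_policy pi' -> is_distr rho ->
  (1 - gamma) * \sum_s `|occ p gamma pi rho s - occ p gamma pi' rho s| <=
  gamma * \sum_s occ p gamma pi' rho s * \sum_a `|pi s a - pi' s a|.
Proof.
move=> hpi hpi' hrho.
set D1 := occ p gamma pi rho; set D2 := occ p gamma pi' rho.
set N := \sum_s `|D1 s - D2 s|; set T := \sum_s D2 s * \sum_a `|pi s a - pi' s a|.
have flow_diff s' : D1 s' - D2 s' = gamma * (\sum_s (D1 s - D2 s) * trans p pi s s' +
     \sum_s D2 s * (trans p pi s s' - trans p pi' s s')).
  rewrite /D1 /D2 (occ_flow hp hg0 hg1 hpi hrho s') (occ_flow hp hg0 hg1 hpi' hrho s').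
  rewrite -/D1 -/D2.
  rewrite -big_split /= [X in _ = _ * X](_ : _ = \sum_s D1 s * trans p pi s s' -
      \sum_s D2 s * trans p pi' s s'); first ring.
  by rewrite -sumrB; apply: eq_bigr => s _; ring.
have : N <= gamma * (N + T).
  rewrite {1}/N; under eq_bigr => s' _ do rewrite flow_diff normrM (ger0_norm hg0).
  rewrite -mulr_sumr ler_wpM2l //.
  apply: (le_trans (ler_sum _ (fun s' _ => ler_normD _ _))).
  rewrite big_split /= lerD //.
    by apply: ler_norm1_stochastic => [s s'|s]; [exact: trans_ge0 | exact: trans_sum1].
  apply: (@le_trans _ _ (\sum_s' \sum_s D2 s * `|trans p pi s s' - trans p pi' s s'|)).
    apply: ler_sum => s' _; apply: (le_trans (ler_norm_sum _ _ _)).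
    by apply: ler_sum => s _; rewrite normrM ger0_norm // occ_ge0.
  rewrite exchange_big /=; apply: ler_sum => s _; rewrite -mulr_sumr.
  by rewrite ler_wpM2l ?occ_ge0 ?trans_dist_le.
by rewrite -/N -/T; lra.
Qed.

Lemma occ_change_le pi pi' rho (f : S -> R) C :
  is_policy pi -> is_policy pi' -> is_distr rho -> 0 <= C -> (forall s, `|f s| <= C) ->
  \sum_s occ p gamma pi' rho s * f s
    - C * gamma / (1 - gamma) * \sum_s occ p gamma pi' rho s * \sum_a `|pi s a - pi' s a|
  <= \sum_s occ p gamma pi rho s * f s.
Proof.
move=> hpi hpi' hrho C0 hC.
set D1 := occ p gamma pi rho; set D2 := occ p gamma pi' rho.
set T := \sum_s D2 s * \sum_a `|pi s a - pi' s a|.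
have hN : \sum_s `|D2 s - D1 s| <= gamma / (1 - gamma) * T.
  rewrite mulrAC ler_pdivlMr ?subr_gt0 // mulrC.
  by under eq_bigr do rewrite distrC; exact: occ_dist_le.
have key := le_trans (ler_sum_mul_norm1 (fun s => D2 s - D1 s) hC) (ler_wpM2l C0 hN).
have eD : \sum_s (D2 s - D1 s) * f s = \sum_s D2 s * f s - \sum_s D1 s * f s.
  by rewrite -sumrB; apply: eq_bigr => s _; rewrite mulrBl.
by move: key; rewrite eD !mulrA; lra.
Qed.

Lemma surrogate_lower_bound pi pik pi' rho C :
  is_policy pi -> is_policy pik -> is_policy pi' -> is_distr rho ->
  (forall s a, pi' s a = 0 -> pi s a = 0) -> 0 <= C ->
  (forall s, `|\sum_a pi s a * Adv p r gamma pik s a| <= C) ->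
  (1 - gamma)^-1 * \sum_s \sum_a (dvis p rho gamma pi' s * pi' s a) *
      (pi s a / pi' s a * Adv p r gamma pik s a)
  - (2 * gamma * C) / (1 - gamma) ^+ 2 * \sum_s dvis p rho gamma pi' s * TV pi pi' s
  <= J p r rho gamma pi - J p r rho gamma pik.
Proof.
move=> hpi hpik hpi' hrho supp C0 hC.
rewrite sum_importance_weight // (performance_difference hpi hpik hrho).
under eq_bigr do rewrite dvisE -mulrA; rewrite -mulr_sumr.
set T := \sum_s occ p gamma pi' rho s * \sum_a `|pi s a - pi' s a|.
have -> : \sum_s dvis p rho gamma pi' s * TV pi pi' s = (1 - gamma) / 2 * T.
  by rewrite /T mulr_sumr; apply: eq_bigr => s _; rewrite dvisE /TV; field.
have -> x : (1 - gamma)^-1 * ((1 - gamma) * x) -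
    2 * gamma * C / (1 - gamma) ^+ 2 * ((1 - gamma) / 2 * T) = x - C * gamma / (1 - gamma) * T.
  by field; rewrite subr_eq0 eq_sym lt_eqF.
exact: occ_change_le.
Qed.

End PerformanceBounds.

Unset Implicit Arguments.

Theorem theorem1 (R : realType) (S A : finType)
  (p : S -> A -> S -> R) (r : S -> A -> R) (rho0 : S -> R) (gamma : R)
  (k : nat) (pol : nat -> S -> A -> R) (pi : S -> A -> R) (nu : 'I_k.+1 -> R) :
  is_kernel p -> is_distr rho0 -> 0 <= gamma -> gamma < 1 ->
  is_policy pi -> (forall j, (j <= k)%N -> is_policy (pol j)) ->
  (forall i, 0 <= nu i <= 1) -> \sum_(i < k.+1) nu i = 1 ->
  (forall i : 'I_k.+1, 0 < nu i -> forall s a, pol (k - i)%N s a = 0 -> pi s a = 0) ->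
  let Ak := Adv p r gamma (pol k) in
  let C := \big[Num.max/0]_(s : S) `|\sum_(a : A) pi s a * Ak s a| in
  J p r rho0 gamma pi - J p r rho0 gamma (pol k) >=
    (1 - gamma)^-1 *
      \sum_(i < k.+1) nu i *
        \sum_(s : S) \sum_(a : A)
          (dvis p rho0 gamma (pol (k - i)%N) s * pol (k - i)%N s a) *
          (pi s a / pol (k - i)%N s a * Ak s a)
    - (2 * gamma * C) / (1 - gamma) ^+ 2 *
      \sum_(i < k.+1) nu i *
        \sum_(s : S) dvis p rho0 gamma (pol (k - i)%N) s * TV pi (pol (k - i)%N) s.
Proof.
move=> hp hrho hg0 hg1 hpi hpol hnu hnu1 hsupp /=.
set Ak := Adv p r gamma (pol k); set C := \big[Num.max/0]_s _.
have hC s : `|\sum_a pi s a * Ak s a| <= C by exact: le_bigmax.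
have C0 : 0 <= C by exact: bigmax_ge_id.
have -> : J p r rho0 gamma pi - J p r rho0 gamma (pol k) =
    \sum_(i < k.+1) nu i * (J p r rho0 gamma pi - J p r rho0 gamma (pol k)).
  by rewrite -mulr_suml hnu1 mul1r.
rewrite !mulr_sumr -sumrB; apply: ler_sum => i _.
rewrite mulrCA [X in _ - X]mulrCA -mulrBr.
have /andP[+ _] := hnu i; rewrite le_eqVlt => /orP[/eqP <-|nu_pos].
  by rewrite !mul0r.
apply: (ler_wpM2l (ltW nu_pos)).
apply: surrogate_lower_bound => //.
- exact: hpol.
- exact/hpol/leq_subr.
- exact: hsupp.
Qed.
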